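(* For every partition $\lambda$ with at most $n$ parts, $$V^*_\lambda=\mathrm{Span}_{\mathbb{Q}(q,t)}\{E^*_\mu:\mu\in S_n(\lambda)\},$$ where $S_n(\lambda)$ is the set of rearrangements of $\lambda$.
   Context: Polynomials are in $x_1,\dots,x_n$ over $\mathbb{Q}(q,t)$; $\mathcal{P}_n^{(d)}$ denotes polynomials of degree at most $d$. For $\mu\in\mathbb{N}^n$ let $k_i(\mu)=\#\{j<i:\mu_j>\mu_i\}+\#\{j>i:\mu_j\ge\mu_i\}$ and $\widetilde\mu=(q^{\mu_1}t^{-k_1(\mu)},\dots,q^{\mu_n}t^{-k_n(\mu)})$. For $\mu\in\mathbb{N}^n$ with $|\mu|=d$, $E^*_\mu$ is the unique polynomial in $\mathcal{P}_n^{(d)}$ whose coefficient of $x^\mu$ is $1$ and with $E^*_\mu(\widetilde\nu)=0$ for all $\nu\in\mathbb{N}^n$, $|\nu|\le d$, $\nu\ne\mu$. For a partition $\lambda$ of size $d$, $V^*_\lambda=\{f\in\mathcal{P}_n^{(d)}: f(\widetilde\nu)=0 \text{ for all } \nu\in\mathbb{N}^n \text{ with } |\nu|\le|\lambda| \text{ and } \nu\notin S_n(\lambda)\}$. *)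

From HB Require Import structures.
From mathcomp Require Import all_boot all_order all_algebra all_fingroup.
From mathcomp Require Import fraction.
From mathcomp Require Import mpoly.
From Stdlib Require Import ClassicalEpsilon.
Set Implicit Arguments. Unset Strict Implicit. Unset Printing Implicit Defensive.
Import Order.TTheory GRing.Theory Num.Theory.
Local Open Scope ring_scope.

(* The field Q(q,t): fractions of bivariate polynomials {poly {poly rat}}.
   q is the inner variable, t the outer variable. *)
Definition Qqt : fieldType := {fraction {poly {poly rat}}}.
Definition qq : Qqt := FracField.tofrac (('X : {poly rat})%:P : {poly {poly rat}}).
Definition tt_ : Qqt := FracField.tofrac ('X : {poly {poly rat}}).

Definition wt (n : nat) (mu : 'X_{1..n}) : nat := mdeg mu.

Definition kk (n : nat) (mu : 'X_{1..n}) (i : 'I_n) : nat :=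
  (#|[set j : 'I_n | (j < i)%N && (mu i < mu j)%N]|
   + #|[set j : 'I_n | (i < j)%N && (mu i <= mu j)%N]|)%N.

Definition tilde (n : nat) (mu : 'X_{1..n}) : 'I_n -> Qqt :=
  fun i => qq ^+ (mu i) * tt_ ^- (kk mu i).

(* f in P_n^(d): total degree at most d (msize = 1 + degree, 0 for f = 0) *)
Definition degle (n : nat) (d : nat) (f : {mpoly Qqt[n]}) : Prop :=
  (msize f <= d.+1)%N.

Definition is_Estar (n : nat) (mu : 'X_{1..n}) (f : {mpoly Qqt[n]}) : Prop :=
  degle (wt mu) f /\ f@_mu = 1 /\
  (forall nu : 'X_{1..n}, (wt nu <= wt mu)%N -> nu <> mu -> f.@[tilde nu] = 0).

(* E*_mu: "the unique polynomial" with the above property (chosen by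
   classical choice; when it exists uniquely this is that polynomial). *)
Definition Estar (n : nat) (mu : 'X_{1..n}) : {mpoly Qqt[n]} :=
  epsilon (inhabits 0) (is_Estar mu).

Definition is_partition (n : nat) (lam : 'X_{1..n}) : Prop :=
  forall i j : 'I_n, (i <= j)%N -> (lam j <= lam i)%N.

Definition rearr (n : nat) (lam mu : 'X_{1..n}) : Prop :=
  exists s : 'S_n, forall i : 'I_n, mu i = lam (s i).

Definition Vstar (n : nat) (lam : 'X_{1..n}) (f : {mpoly Qqt[n]}) : Prop :=
  degle (wt lam) f /\
  (forall nu : 'X_{1..n}, (wt nu <= wt lam)%N -> ~ rearr lam nu ->
     f.@[tilde nu] = 0).

Definition permm (n : nat) (lam : 'X_{1..n}) (s : 'S_n) : 'X_{1..n} :=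
  [multinom lam (s i) | i < n].

(* The key fact is a vanishing theorem for the points [tilde nu], in the spirit of
   Knop and Sahi: a polynomial [f] of degree at most [d] such that, for every [nu] with
   [|nu| <= d], either [f (tilde nu) = 0] or [|nu| = d] and the coefficient of [x^nu] in
   [f] is zero, is itself zero.  It is proved for polynomials in [x_j, ..., x_(n-1)] by
   downward induction on [j] and, inside, induction on [d].  Write
   [f = f(x_j := c) + (x_j - c) g] with [c = t^(-k_j(0))].  When [nu_i = 0] for [i <= j],
   the [j]-th coordinate of [tilde nu] is [c]; so [f(x_j := c)], which involves only
   [x_(j+1), ...], vanishes by the outer induction.  When [nu_i = 0] for [i < j] and
   [nu_j > 0], [tilde nu] is obtained from [tilde mu], where [mu] is [nu - e_j] with its
   [j]-th entry moved to the end, by moving the last coordinate back to position [j] and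
   multiplying it by [q]; so [g] composed with this transformation, of degree [d - 1],
   satisfies the hypothesis and vanishes by the inner induction.

   The vanishing theorem makes the evaluation matrix at the points [tilde nu],
   [|nu| <= d], invertible, which yields [E*_mu], and shows [E*_mu (tilde mu) <> 0].
   Then an [f] in [V*_lam] and [sum_mu f (tilde mu) / E*_mu (tilde mu) * E*_mu], over
   the distinct rearrangements [mu] of [lam], agree at every [tilde nu] with
   [|nu| <= |lam|], hence are equal. *)

From HB Require Import structures.
From mathcomp Require Import all_boot all_order all_algebra all_fingroup.
From mathcomp Require Import fraction mpoly.
From mathcomp Require Import zify ring.
From Stdlib Require Import ClassicalEpsilon.
Set Implicit Arguments. Unset Strict Implicit. Unset Printing Implicit Defensive.
Import GRing.Theory.
Local Open Scope ring_scope.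

Section MpolyFacts.
Variables (R : nzRingType) (n : nat).
Implicit Types (f : {mpoly R[n]}) (m : 'X_{1..n}).

Lemma msize_sum_le (I : Type) (r : seq I) (P : pred I) (F : I -> {mpoly R[n]}) k :
  (forall i, P i -> (msize (F i) <= k)%N) -> (msize (\sum_(i <- r | P i) F i) <= k)%N.
Proof.
move=> leFk; apply: leq_trans (msize_sum _ _ _) _.
by elim/big_ind: _ => //= x y lexk leyk; rewrite geq_max lexk.
Qed.

Lemma msize_scaleX (c : R) m k : (mdeg m < k)%N -> (msize (c *: 'X_[m] : {mpoly R[n]}) <= k)%N.
Proof. by move=> ltmk; apply: leq_trans (msizeZ_le _ _) _; rewrite msizeX. Qed.

Lemma mcoeff_sum_scaleX (I : Type) (r : seq I) (a : I -> R) (phi : I -> 'X_{1..n}) mu :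
  (\sum_(i <- r) a i *: 'X_[phi i] : {mpoly R[n]})@_mu = \sum_(i <- r) a i * (phi i == mu)%:R.
Proof. by rewrite (raddf_sum (mcoeff mu)); apply: eq_bigr => i _ /=; rewrite mcoeffZ mcoeffX. Qed.

Lemma sum_msupp_mcoeff_eq (a : 'X_{1..n} -> R) f m :
  \sum_(m' <- msupp f) f@_m' * a m' * (m' == m)%:R = f@_m * a m.
Proof.
have [fm|fm] := boolP (m \in msupp f).
  rewrite (bigD1_seq m) //= ?msupp_uniq // eqxx mulr1 big1 ?addr0 // => i /negbTE ->.
  by rewrite mulr0.
rewrite memN_msupp_eq0 // mul0r big_seq big1 // => i fi.
have /negbTE -> : i != m by apply: contraNneq fm => <-.
by rewrite mulr0.
Qed.

End MpolyFacts.

Section Support.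
Variables (R : nzRingType) (n : nat).

Definition mnm_from (k : nat) (m : 'X_{1..n}) : bool :=
  [forall i : 'I_n, (i < k)%N ==> (m i == 0%N)].

Definition mpoly_from (k : nat) (f : {mpoly R[n]}) : Prop :=
  forall m, ~~ mnm_from k m -> f@_m = 0.

Lemma mnm_fromP k (m : 'X_{1..n}) :
  reflect (forall i : 'I_n, (i < k)%N -> m i = 0%N) (mnm_from k m).
Proof.
apply: (iffP forallP) => [mk i ltik|mk i]; first by move/implyP/(_ ltik)/eqP: (mk i).
by apply/implyP => /mk ->.
Qed.

Lemma mnm_from_msupp k f m : mpoly_from k f -> m \in msupp f -> mnm_from k m.
Proof. by move=> fk; apply: contraTT => /fk; rewrite mcoeff_msupp => ->; rewrite eqxx. Qed.

End Support.

Section Specialization.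
Variables (R : comNzRingType) (n : nat) (j : 'I_n) (c : R).
Implicit Types (f : {mpoly R[n]}) (m : 'X_{1..n}).

Definition mnm_zero_at m : 'X_{1..n} := [multinom (if i == j then 0 else m i)%N | i < n].

Lemma mnm_zero_atE m : m = (mnm_zero_at m + U_(j) *+ m j)%MM.
Proof.
apply/mnmP => i; rewrite mnmDE mulmnE mnm1E mnmE eq_sym.
by case: eqP => [->|_]; rewrite ?mul1n ?mul0n ?addn0.
Qed.

Lemma mdeg_mnm_zero_at m : (mdeg (mnm_zero_at m) + m j)%N = mdeg m.
Proof. by rewrite [in RHS](mnm_zero_atE m) mdegD mdegMn mdeg1 mul1n. Qed.

Lemma mnm_zero_at_id m : m j = 0%N -> mnm_zero_at m = m.
Proof. by move=> mj0; apply/mnmP => i; rewrite mnmE; case: eqP => [->|]. Qed.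

(* [mspec f] is [f] with [x_j := c], and [mquot f] the quotient of [f] by [x_j - c]. *)
Definition mspec f : {mpoly R[n]} :=
  \sum_(m <- msupp f) (f@_m * c ^+ m j) *: 'X_[mnm_zero_at m].

Definition mquot f : {mpoly R[n]} :=
  \sum_(m <- msupp f) \sum_(l < m j)
     (f@_m * c ^+ l) *: 'X_[(mnm_zero_at m + U_(j) *+ ((m j).-1 - l))%MM].

Lemma mspec_mquotE f : f = mspec f + ('X_j - c%:MP) * mquot f.
Proof.
rewrite {1}(mpolyE f) /mspec /mquot mulr_sumr -big_split; apply: eq_bigr => m _ /=.
set s := mnm_zero_at m.
have sX (a : R) k : a *: 'X_[(s + U_(j) *+ k)%MM] = 'X_[s] * ('X_j ^+ k * a%:MP) :> {mpoly R[n]}.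
  by rewrite mpolyXD -mpolyXn -mul_mpolyC; ring.
under eq_bigr do rewrite -scalerA sX.
rewrite -scaler_sumr -scalerAr -scalerA.
have -> : c ^+ m j *: 'X_[s] = 'X_[s] * (c%:MP ^+ m j) :> {mpoly R[n]}.
  by rewrite -rmorphXn -mul_mpolyC mulrC.
rewrite -mulr_sumr -scalerDr; congr (_ *: _).
under eq_bigr do rewrite rmorphXn.
rewrite mulrCA -subrXX {1}(mnm_zero_atE m) mpolyXD -/s -mpolyXn; ring.
Qed.

Lemma meval_mspec f (x : 'I_n -> R) : x j = c -> (mspec f).@[x] = f.@[x].
Proof.
move=> xj; rewrite [in RHS](mspec_mquotE f) mevalD mevalM mevalB mevalXU mevalC xj.
by rewrite subrr mul0r addr0.
Qed.

Lemma msize_mspec f : (msize (mspec f) <= msize f)%N.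
Proof.
rewrite /mspec big_seq; apply: msize_sum_le => m fm; apply: msize_scaleX.
by have := mdeg_mnm_zero_at m; have := msize_mdeg_lt fm; lia.
Qed.

Lemma msize_mquot f d : (msize f <= d.+1)%N -> (msize (mquot f) <= d)%N.
Proof.
move=> sf; rewrite /mquot big_seq; apply: msize_sum_le => m fm.
apply: msize_sum_le => l _; apply: msize_scaleX.
rewrite mdegD mdegMn mdeg1 mul1n.
by have := mdeg_mnm_zero_at m; have := msize_mdeg_lt fm; have := ltn_ord l; lia.
Qed.

Lemma mcoeff_mspec_top f d mu : (msize f <= d.+1)%N -> mdeg mu = d -> mu j = 0%N ->
  (mspec f)@_mu = f@_mu.
Proof.
move=> sf degmu muj; rewrite mcoeff_sum_scaleX -[RHS]mulr1 -(sum_msupp_mcoeff_eq (fun=> 1)).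
rewrite !big_seq; apply: eq_bigr => m fm; rewrite mulr1.
have [zm|zm] := eqVneq (mnm_zero_at m) mu.
  have mj : m j = 0%N.
    have := mdeg_mnm_zero_at m; have := msize_mdeg_lt fm; rewrite zm; lia.
  by rewrite mj expr0 -zm mnm_zero_at_id // eqxx !mulr1.
have -> : (m == mu) = false.
  apply/eqP => mmu; move: zm; rewrite -mmu mnm_zero_at_id ?eqxx //.
  by rewrite mmu.
by rewrite !mulr0.
Qed.

Lemma mcoeff_mquot f d nu : mspec f = 0 -> (msize f <= d.+1)%N ->
  mdeg nu = d -> (0 < nu j)%N -> f@_nu = (mquot f)@_(nu - U_(j))%MM.
Proof.
move=> f0 sf degnu nuj.
have nuE : nu = (U_(j) + (nu - U_(j)))%MM by rewrite addmC submK // lep1mP; lia.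
have top : (mquot f)@_nu = 0.
  by apply/memN_msupp_eq0/msize_mdeg_ge; rewrite degnu msize_mquot.
rewrite {1}(mspec_mquotE f) f0 add0r mulrBl mcoeffB mcoeffCM top mulr0 subr0.
by rewrite mulrC {1}nuE mcoeffMX.
Qed.

Lemma mspec_from f : mpoly_from j f -> mpoly_from j.+1 (mspec f).
Proof.
move=> fj mu muj; rewrite mcoeff_sum_scaleX big_seq big1 // => m fm.
case: eqP => [zm|]; last by rewrite mulr0.
have /mnm_fromP mj := mnm_from_msupp fj fm.
case/negP: muj; apply/mnm_fromP => i lt_ij1; rewrite -zm mnmE.
by case: eqP => // /eqP ij; apply: mj; rewrite ltn_neqAle -ltnS lt_ij1 andbT.
Qed.

Lemma mquot_from f : mpoly_from j f -> mpoly_from j (mquot f).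
Proof.
move=> fj mu muj; rewrite /mquot (raddf_sum (mcoeff mu)) big_seq big1 // => m fm /=.
rewrite (raddf_sum (mcoeff mu)) big1 // => l _ /=; rewrite mcoeffZ mcoeffX.
case: eqP => [zm|]; last by rewrite mulr0.
have /mnm_fromP mj := mnm_from_msupp fj fm.
case/negP: muj; apply/mnm_fromP => i lt_ij; rewrite -zm mnmDE mulmnE mnm1E mnmE.
have /negbTE ij : i != j by apply: contraTneq lt_ij => ->; rewrite ltnn.
by rewrite ij eq_sym ij mul0n addn0 mj.
Qed.

End Specialization.

Lemma tt_neq0 : tt_ != 0.
Proof. by rewrite /tt_ tofrac_eq0 polyX_eq0. Qed.

Lemma qq_neq0 : qq != 0.
Proof. by rewrite /qq tofrac_eq0 polyC_eq0 polyX_eq0. Qed.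

Lemma qqX_ttVX_neq (a b e : nat) : (0 < a)%N -> qq ^+ a * tt_ ^- b != tt_ ^- e.
Proof.
move=> a_gt0; apply/eqP => eq_ab.
have : qq ^+ a * tt_ ^+ e = tt_ ^+ b.
  have tt0 k : tt_ ^+ k != 0 by rewrite expf_neq0 // tt_neq0.
  have := congr1 (fun z => z * tt_ ^+ b * tt_ ^+ e) eq_ab.
  by rewrite /= mulfVK ?tt0 // mulrAC mulVf ?tt0 // mul1r.
rewrite /qq /tt_ -!tofracXn -tofracM => /eqP; rewrite tofrac_eq => /eqP /(congr1 (coefp e)).
rewrite /= -rmorphXn coefCM coefXn eqxx mulr1 coefXn => Xa.
have : size ('X^a : {poly rat}) = a.+1 by rewrite size_polyXn.
by rewrite Xa; case: (e == b); rewrite ?size_poly1 ?size_poly0; lia.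
Qed.

Definition kk_pair (x y a b : nat) : nat :=
  (((y < x) && (a < b)) + ((x < y) && (a <= b)))%N.

Lemma kk_sum n (mu : 'X_{1..n}) (i : 'I_n) : kk mu i = (\sum_(l < n) kk_pair i l (mu i) (mu l))%N.
Proof.
have card_setE (P : pred 'I_n) : #|[set l | P l]| = (\sum_l P l)%N.
  by rewrite -sum1_card big_mkcond /=; apply: eq_bigr => l _; rewrite inE; case: (P l).
by rewrite /kk !card_setE -big_split.
Qed.

Lemma kk_prefix0 n (mu : 'X_{1..n}) (i : 'I_n) :
  (forall l : 'I_n, (l <= i)%N -> mu l = 0%N) -> kk mu i = kk 0%MM i.
Proof.
move=> mu0; rewrite !kk_sum; apply: eq_bigr => l _; rewrite !mnm0E mu0 // /kk_pair.
by case: (ltnP l i) => [/ltnW/mu0 -> //|_]; rewrite !leq0n.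
Qed.

Definition cyc_nat (j n' k : nat) : nat :=
  if (k < j)%N then k else if (k < n')%N then k.+1 else j.

(* Lowering the first nonzero entry [N j] by one and moving it to the last position
   changes none of the comparisons counted by [kk]: the move breaks ties with it the
   other way, and the decrement compensates. *)
Lemma kk_pair_cyc_nat (j n' x y : nat) (N : nat -> nat) :
  (x <= n')%N -> (y <= n')%N -> (j <= n')%N ->
  (forall k, (k < j)%N -> N k = 0%N) -> (0 < N j)%N ->
  let c := cyc_nat j n' in
  kk_pair x y (N (c x) - (c x == j)) (N (c y) - (c y == j)) =
  kk_pair (c x) (c y) (N (c x)) (N (c y)).
Proof.
move=> xn yn jn N0 Nj /=; rewrite /kk_pair /cyc_nat.
have := N0 x; have := N0 y; have := N0 x.+1; have := N0 y.+1.
by repeat case: ifP => ?; lia.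
Qed.

Lemma permm_inj n (s : 'S_n) : injective (fun m => permm m s).
Proof. exact: mperm_inj. Qed.

Lemma permmKV n (s : 'S_n) : cancel (fun m => permm m s^-1%g) (fun m => permm m s).
Proof. exact: mpermK. Qed.

Lemma wt_permm n (lam : 'X_{1..n}) (s : 'S_n) : wt (permm lam s) = wt lam.
Proof. exact: mdeg_mperm. Qed.

Section Cycle.
Variables (n' : nat) (j : 'I_n'.+1).
Local Notation n := n'.+1.
Implicit Types (f : {mpoly Qqt[n]}) (m nu : 'X_{1..n}) (i : 'I_n).

Definition cyc_fun (i : 'I_n) : 'I_n := inord (cyc_nat j n' i).

Lemma cyc_fun_val i : cyc_fun i = cyc_nat j n' i :> nat.
Proof.
rewrite inordK // /cyc_nat; have := ltn_ord i; have := ltn_ord j.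
by repeat case: ifP; lia.
Qed.

Lemma cyc_fun_inj : injective cyc_fun.
Proof.
move=> x y /(congr1 (@nat_of_ord _)); rewrite !cyc_fun_val /cyc_nat => exy; apply: val_inj => /=.
by move: exy; have := ltn_ord x; have := ltn_ord y; have := ltn_ord j; repeat case: ifP; lia.
Qed.

Definition cyc : 'S_n := perm cyc_fun_inj.

Lemma cyc_val i : cyc i = cyc_nat j n' i :> nat.
Proof. by rewrite permE cyc_fun_val. Qed.

Lemma cyc_lt i : (i < j)%N -> cyc i = i.
Proof. by move=> lt_ij; apply: ord_inj; rewrite cyc_val /cyc_nat lt_ij. Qed.

Definition cyc_pt (y : 'I_n -> Qqt) (i : 'I_n) : Qqt :=
  (if i == j then qq else 1) * y (cyc^-1%g i).

Definition mpoly_cyc f : {mpoly Qqt[n]} :=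
  \sum_(m <- msupp f) (f@_m * qq ^+ m j) *: 'X_[permm m cyc].

Lemma mcoeff_mpoly_cyc f m : (mpoly_cyc f)@_(permm m cyc) = f@_m * qq ^+ m j.
Proof.
rewrite mcoeff_sum_scaleX; under eq_bigr do rewrite (inj_eq (@permm_inj _ cyc)).
exact: (sum_msupp_mcoeff_eq (fun m => qq ^+ m j)).
Qed.

Lemma mpoly_cyc_eq0 f : mpoly_cyc f = 0 -> f = 0.
Proof.
move=> f0; apply/mpolyP => m; have := mcoeff_mpoly_cyc f m.
rewrite f0 mcoeff0 => /esym/eqP; rewrite mulf_eq0 expf_eq0 (negbTE qq_neq0) andbF orbF.
by rewrite mcoeff0 => /eqP.
Qed.

Lemma msize_mpoly_cyc f : (msize (mpoly_cyc f) <= msize f)%N.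
Proof.
rewrite /mpoly_cyc big_seq; apply: msize_sum_le => m fm; apply: msize_scaleX.
by rewrite -[mdeg _]/(wt _) wt_permm; apply: msize_mdeg_lt.
Qed.

Lemma mpoly_cyc_from f : mpoly_from j f -> mpoly_from j (mpoly_cyc f).
Proof.
move=> fj mu muj; rewrite mcoeff_sum_scaleX big_seq big1 // => m fm.
case: eqP => [mmu|]; last by rewrite mulr0.
have /mnm_fromP mj := mnm_from_msupp fj fm.
by case/negP: muj; apply/mnm_fromP => i lt_ij; rewrite -mmu mnmE cyc_lt // mj.
Qed.

Lemma meval_mpoly_cyc f (y : 'I_n -> Qqt) : (mpoly_cyc f).@[y] = f.@[cyc_pt y].
Proof.
rewrite [in RHS](mpolyE f) /mpoly_cyc !raddf_sum; apply: eq_bigr => m _ /=.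
rewrite !mevalZ !mevalX -mulrA; congr (_ * _).
under [in RHS]eq_bigr do rewrite exprMn.
rewrite big_split /=; congr (_ * _).
  rewrite (bigD1 j) //= eqxx big1 ?mulr1 // => i /negbTE ->.
  by rewrite expr1n.
rewrite [RHS](reindex_inj (@perm_inj _ cyc)) /=.
by apply: eq_bigr => i _; rewrite mnmE permK.
Qed.

Lemma kk_cyc nu : mnm_from j nu -> (0 < nu j)%N ->
  forall i, kk (permm (nu - U_(j))%MM cyc) i = kk nu (cyc i).
Proof.
move=> /mnm_fromP nu0 nuj i; rewrite !kk_sum [RHS](reindex_inj (@perm_inj _ cyc)) /=.
apply: eq_bigr => l _.
have nuE x : nu (cyc x) = nu (inord (cyc_nat j n' x)) by rewrite -cyc_val inord_val.
have jE x : (j == cyc x) = (cyc_nat j n' x == j) by rewrite eq_sym -val_eqE /= cyc_val.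
rewrite !mnmE !jE !nuE !cyc_val.
have le_n' (k : 'I_n) : (k <= n')%N by rewrite -ltnS.
apply: (@kk_pair_cyc_nat j n' i l (fun k => nu (inord k))); rewrite ?le_n' //.
- by move=> k lt_kj; apply: nu0; rewrite inordK //; have := ltn_ord j; lia.
- by rewrite inord_val.
Qed.

Lemma tilde_cyc nu : mnm_from j nu -> (0 < nu j)%N ->
  tilde nu =1 cyc_pt (tilde (permm (nu - U_(j))%MM cyc)).
Proof.
move=> nuj0 nuj i; rewrite /cyc_pt -{1 2}(permKV cyc i); move: (cyc^-1%g i) => i'.
rewrite /tilde kk_cyc // mnmE mnmBE mnm1E.
case: eqP => [->|/eqP ne]; first by rewrite eqxx mulrA -exprS; congr (_ ^+ _ * _); lia.
by rewrite eq_sym (negbTE ne) mul1r subn0.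
Qed.

End Cycle.

Definition tilde_null n (k d : nat) (f : {mpoly Qqt[n]}) : Prop :=
  forall nu : 'X_{1..n}, mnm_from k nu -> (mdeg nu <= d)%N ->
    f.@[tilde nu] = 0 \/ (mdeg nu = d /\ f@_nu = 0).

Definition tilde_vanishing n (k : nat) : Prop :=
  forall d (f : {mpoly Qqt[n]}),
    (msize f <= d.+1)%N -> mpoly_from k f -> tilde_null k d f -> f = 0.

Lemma tilde_vanishing_n n : tilde_vanishing n n.
Proof.
move=> d f _ fn fnull.
have z0 : mnm_from n (0%MM : 'X_{1..n}) by apply/mnm_fromP => i _; rewrite mnm0E.
have fC : f = (f@_0%MM)%:MP.
  apply/mpolyP => m; rewrite mcoeffC; have [->|m0] := eqVneq m 0%MM; first by rewrite mulr1.
  rewrite mulr0; apply: fn; apply: contra m0 => /mnm_fromP m0.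
  by apply/eqP/mnmP => i; rewrite mnm0E m0.
have f00 : f@_0%MM = 0.
  have := fnull 0%MM z0; rewrite mdeg0 => /(_ (leq0n d)) [f0|[_ //]].
  by rewrite fC mevalC in f0.
by rewrite fC f00.
Qed.

Lemma tilde_prefix0 n (nu : 'X_{1..n}) (j : 'I_n) :
  (forall l : 'I_n, (l <= j)%N -> nu l = 0%N) -> tilde nu j = tilde 0%MM j.
Proof. by move=> nu0; rewrite /tilde (kk_prefix0 nu0) nu0 // mnm0E. Qed.

Lemma tilde_neq_tilde0 n (nu : 'X_{1..n}) (j : 'I_n) : (0 < nu j)%N -> tilde nu j != tilde 0%MM j.
Proof. by move=> nuj; rewrite {2}/tilde mnm0E expr0 mul1r qqX_ttVX_neq. Qed.

Lemma mspec_tilde_eq0 n (j : 'I_n) d (f : {mpoly Qqt[n]}) :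
  tilde_vanishing n j.+1 -> (msize f <= d.+1)%N -> mpoly_from j f -> tilde_null j d f ->
  mspec j (tilde 0%MM j) f = 0.
Proof.
move=> IH sf fj fnull; apply: (IH d); first exact: leq_trans (msize_mspec _ _ f) sf.
  exact: mspec_from.
move=> nu nuj1 degnu; have /mnm_fromP nu0 := nuj1.
have nuj : mnm_from j nu by apply/mnm_fromP => i lt_ij; apply: nu0; lia.
have [fnu|[degnu' fnu]] := fnull nu nuj degnu.
  by left; rewrite meval_mspec // tilde_prefix0 // => l; rewrite -ltnS; apply: nu0.
by right; split => //; rewrite (mcoeff_mspec_top _ sf) // nu0.
Qed.

Section Step.
Variables (n' : nat) (j : 'I_n'.+1).
Local Notation n := n'.+1.
Local Notation c := (tilde 0%MM j).

Lemma tilde_null_mpoly_cyc d (f : {mpoly Qqt[n]}) :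
  mspec j c f = 0 -> (msize f <= d.+2)%N -> mpoly_from j f -> tilde_null j d.+1 f ->
  tilde_null j d (mpoly_cyc j (mquot j c f)).
Proof.
move=> f0 sf fj fnull mu /mnm_fromP mu0 degmu.
set g := mquot j c f; set nu := (permm mu (cyc j)^-1 + U_(j))%MM.
have nuj : mnm_from j nu.
  apply/mnm_fromP => i lt_ij; rewrite mnmDE mnmE mnm1E.
  have -> : (cyc j)^-1%g i = i by apply: (canLR (permK _)); rewrite cyc_lt.
  by rewrite mu0 // (_ : (j == i) = false) //; apply: contraTF lt_ij => /eqP ->; rewrite ltnn.
have nuj_gt0 : (0 < nu j)%N by rewrite mnmDE mnm1E eqxx addn1.
have munu : permm (nu - U_(j))%MM (cyc j) = mu by rewrite addmK permmKV.
have degnu : mdeg nu = (mdeg mu).+1.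
  by rewrite mdegD mdeg1 -[mdeg (permm _ _)]/(wt _) wt_permm addn1.
have le_nu : (mdeg nu <= d.+1)%N by rewrite degnu.
have [fnu|[degnu' fnu]] := fnull nu nuj le_nu.
  left; have : (tilde nu j - c) * g.@[tilde nu] = 0.
    by rewrite -fnu [in RHS](mspec_mquotE j c f) f0 add0r mevalM mevalB mevalXU mevalC.
  move/eqP; rewrite mulf_eq0 subr_eq0 (negbTE (tilde_neq_tilde0 nuj_gt0)) /= => /eqP gnu.
  by rewrite meval_mpoly_cyc -gnu; apply: meval_eq => i; rewrite (tilde_cyc nuj) // munu.
right; split; first by move: degnu'; rewrite degnu; lia.
rewrite -munu mcoeff_mpoly_cyc.
by rewrite -(mcoeff_mquot f0 sf degnu' nuj_gt0) fnu mul0r.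
Qed.

Lemma tilde_vanishing_step : tilde_vanishing n j.+1 -> tilde_vanishing n j.
Proof.
move=> IH; elim=> [|d IHd] f sf fj fnull.
all: have f0 := mspec_tilde_eq0 IH sf fj fnull.
all: rewrite (mspec_mquotE j c f) f0 add0r; suff -> : mquot j c f = 0 by rewrite mulr0.
  by apply/eqP; rewrite -msize_poly_eq0 -leqn0 msize_mquot.
apply: mpoly_cyc_eq0; apply: (IHd _ (leq_trans (msize_mpoly_cyc _ _) (msize_mquot _ _ sf))).
  exact/mpoly_cyc_from/mquot_from.
exact: tilde_null_mpoly_cyc f0 sf fj fnull.
Qed.

End Step.

Lemma tilde_vanishing0 n : tilde_vanishing n 0.
Proof.
case: n => [|n']; first exact: tilde_vanishing_n.
suff down k : (k <= n'.+1)%N -> tilde_vanishing n'.+1 (n'.+1 - k).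
  by have := down n'.+1 (leqnn _); rewrite subnn.
elim: k => [_|k IHk lt_kn]; first by rewrite subn0; exact: tilde_vanishing_n.
have lt_n : (n'.+1 - k.+1 < n'.+1)%N by lia.
have := @tilde_vanishing_step n' (Ordinal lt_n); apply.
by rewrite /= -subSn // subSS; apply: IHk; lia.
Qed.

Theorem mpoly_tilde_eq0 n d (f : {mpoly Qqt[n]}) : (msize f <= d.+1)%N ->
  (forall nu, (mdeg nu <= d)%N -> f.@[tilde nu] = 0 \/ (mdeg nu = d /\ f@_nu = 0)) -> f = 0.
Proof.
move=> sf fnull; apply: (tilde_vanishing0 sf) => [m|nu _]; last exact: fnull.
by case/negP; apply/mnm_fromP.
Qed.

Section Existence.
Variables n d : nat.
Local Notation T := ('X_{1..n < d.+1}).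
Local Notation N := #|{: T}|.

Definition tilde_evalmx : 'M[Qqt]_N :=
  \matrix_(i, k) ('X_[enum_val i : T] : {mpoly Qqt[n]}).@[tilde (enum_val k : T)].

Definition mpoly_of_row (v : 'rV[Qqt]_N) : {mpoly Qqt[n]} :=
  \sum_(i < N) v 0 i *: 'X_[enum_val i : T].

Lemma msize_mpoly_of_row v : (msize (mpoly_of_row v) <= d.+1)%N.
Proof. by apply: msize_sum_le => i _; apply: msize_scaleX; apply: bmdeg. Qed.

Lemma mcoeff_mpoly_of_row v k : (mpoly_of_row v)@_(enum_val k : T) = v 0 k.
Proof.
rewrite /mpoly_of_row -big_enum mcoeff_sum_scaleX big_enum (bigD1 k) //= eqxx mulr1.
rewrite big1 ?addr0 // => i ik.
by rewrite (inj_eq (inj_comp val_inj enum_val_inj)) (negbTE ik) mulr0.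
Qed.

Lemma meval_mpoly_of_row v (nu : T) :
  (mpoly_of_row v).@[tilde nu] = (v *m tilde_evalmx) 0 (enum_rank nu).
Proof.
rewrite raddf_sum !mxE; apply: eq_bigr => i _ /=.
by rewrite mevalZ mxE enum_rankK.
Qed.

Lemma tilde_evalmx_unit : tilde_evalmx \in unitmx.
Proof.
rewrite unitmxE unitfE; apply/negP => /det0P [v v0 vM0].
have p0 : mpoly_of_row v = 0.
  apply: (mpoly_tilde_eq0 (msize_mpoly_of_row v)) => nu lt_nud; left.
  have lt_nud1 : (mdeg nu < d.+1)%N by [].
  by rewrite -[nu]/(val (BMultinom lt_nud1 : T)) meval_mpoly_of_row vM0 mxE.
by case/eqP: v0; apply/rowP => i; rewrite !mxE -mcoeff_mpoly_of_row p0 mcoeff0.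
Qed.

(* The interpolation polynomial with values [nu == mu] at the points [tilde nu],
   [|nu| <= d], is nonzero at [tilde mu], so its coefficient of [x^mu] is nonzero by the
   vanishing theorem; normalizing it gives [E*_mu]. *)
Lemma exists_Estar (mu : 'X_{1..n}) : mdeg mu = d -> exists f, is_Estar mu f.
Proof.
move=> degmu.
pose e : 'rV[Qqt]_N := \row_k (((enum_val k : T) : 'X_{1..n}) == mu)%:R.
pose p := mpoly_of_row (e *m invmx tilde_evalmx).
have p_tilde nu : (mdeg nu <= d)%N -> p.@[tilde nu] = (nu == mu)%:R.
  move=> le_nud; have lt_nud1 : (mdeg nu < d.+1)%N by [].
  rewrite -[nu]/(val (BMultinom lt_nud1 : T)).
  by rewrite meval_mpoly_of_row mulmxKV ?tilde_evalmx_unit // mxE enum_rankK.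
have pmu : p@_mu != 0.
  apply/eqP => pmu0; suff p0 : p = 0.
    by have := p_tilde mu (eq_leq degmu); rewrite p0 meval0 eqxx => /esym/eqP; rewrite oner_eq0.
  apply: (mpoly_tilde_eq0 (msize_mpoly_of_row _)) => nu le_nud.
  have [->|nmu] := eqVneq nu mu; first by right.
  by left; rewrite p_tilde // (negbTE nmu).
exists ((p@_mu)^-1 *: p); split; last split.
- by rewrite /degle /wt degmu; apply: leq_trans (msizeZ_le _ _) (msize_mpoly_of_row _).
- by rewrite mcoeffZ mulVf.
by move=> nu le_numu /eqP nmu; rewrite mevalZ p_tilde -?degmu // (negbTE nmu) mulr0.
Qed.

End Existence.

Lemma Estar_spec n (mu : 'X_{1..n}) : is_Estar mu (Estar mu).
Proof. by apply: epsilon_spec; apply: (exists_Estar (d := mdeg mu)). Qed.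

Lemma Estar_tilde_neq0 n (mu : 'X_{1..n}) : (Estar mu).@[tilde mu] != 0.
Proof.
have [Edeg [Emu Enu]] := Estar_spec mu.
apply: contra_neq (@oner_neq0 Qqt) => Emu0.
rewrite -Emu; suff -> : Estar mu = 0 by rewrite mcoeff0.
apply: (mpoly_tilde_eq0 (d := mdeg mu) Edeg) => nu le_numu; left.
by have [->|/eqP nmu] := eqVneq nu mu; last exact: Enu.
Qed.

Definition fibre_rep (I : finType) (X : eqType) (g : I -> X) (i : I) : bool :=
  [pick i' | g i' == g i] == Some i.

Lemma sum_fibre_rep (I : finType) (X : eqType) (g : I -> X) (x : X) :
  (\sum_(i | g i == x) fibre_rep g i)%N = [exists i, g i == x].
Proof.
rewrite (eq_bigr (fun i => nat_of_bool ([pick i' | g i' == x] == Some i))); last first.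
  by move=> i /eqP gi; rewrite /fibre_rep gi.
case: pickP => [i0 gi0|nox].
  have -> : [exists i, g i == x] by apply/existsP; exists i0.
  rewrite (bigD1 i0) //= eqxx big1 // => i /andP[_ ni0].
  by apply/eqP; rewrite eqb0; apply: contra ni0 => /eqP[->].
have -> : [exists i, g i == x] = false by apply/existsP => -[i]; rewrite nox.
by rewrite big1.
Qed.

Lemma rearr_permm n (lam nu : 'X_{1..n}) : rearr lam nu <-> exists s, permm lam s = nu.
Proof.
split=> [[s nuE]|[s <-]]; exists s; last by move=> i; rewrite mnmE.
by apply/mnmP => i; rewrite mnmE nuE.
Qed.

Section Expansion.
Variables (n : nat) (lam : 'X_{1..n}).
Implicit Types (f : {mpoly Qqt[n]}) (c : 'S_n -> Qqt).

Lemma Estar_permm_tilde s (nu : 'X_{1..n}) : (wt nu <= wt lam)%N -> permm lam s != nu ->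
  (Estar (permm lam s)).@[tilde nu] = 0.
Proof.
have [_ [_ Enu]] := Estar_spec (permm lam s).
by move=> le_nu /eqP nnu; apply: Enu; rewrite ?wt_permm // => /esym.
Qed.

Lemma meval_sum_Estar c (nu : 'X_{1..n}) : (wt nu <= wt lam)%N ->
  (\sum_s c s *: Estar (permm lam s)).@[tilde nu] =
  (\sum_(s | permm lam s == nu) c s) * (Estar nu).@[tilde nu].
Proof.
move=> le_nu; rewrite raddf_sum [in RHS]big_mkcond mulr_suml; apply: eq_bigr => s _ /=.
rewrite mevalZ; case: eqP => [-> //|/eqP nnu].
by rewrite Estar_permm_tilde // mulr0 mul0r.
Qed.

Lemma Vstar_sum_Estar c : Vstar lam (\sum_s c s *: Estar (permm lam s)).
Proof.
split=> [|nu le_nu nrearr].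
  apply: msize_sum_le => s _; apply: leq_trans (msizeZ_le _ _) _.
  by have [+ _] := Estar_spec (permm lam s); rewrite /degle wt_permm.
rewrite meval_sum_Estar // big_pred0 ?mul0r // => s.
by apply/negP => /eqP nuE; apply: nrearr; apply/rearr_permm; exists s.
Qed.

Definition Estar_coef f s : Qqt :=
  (fibre_rep (permm lam) s)%:R *
  (f.@[tilde (permm lam s)] / (Estar (permm lam s)).@[tilde (permm lam s)]).

Lemma Vstar_Estar_expansion f :
  Vstar lam f -> f = \sum_s Estar_coef f s *: Estar (permm lam s).
Proof.
move=> [degf fV]; apply/eqP; rewrite -subr_eq0; apply/eqP.
have [degS _] := Vstar_sum_Estar (Estar_coef f).
apply: (mpoly_tilde_eq0 (d := wt lam)) => [|nu le_nu].
  by apply: leq_trans (msizeD_le _ _) _; rewrite geq_max msizeN degS andbT; exact: degf.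
left; rewrite mevalB meval_sum_Estar //.
under eq_bigr => s /eqP nuE do rewrite /Estar_coef nuE.
rewrite -mulr_suml -natr_sum sum_fibre_rep.
case: existsP => [_|nonu]; first by rewrite mul1r divfK ?subrr // Estar_tilde_neq0.
rewrite mul0r mul0r subr0 fV // => /rearr_permm [s nuE]; apply: nonu; exists s; exact/eqP.
Qed.

End Expansion.

Unset Implicit Arguments.

Theorem lemma2p5 (n : nat) (lam : 'X_{1..n}) :
  is_partition lam ->
  forall f : {mpoly Qqt[n]},
    Vstar lam f <->
    exists c : 'S_n -> Qqt, f = \sum_(s : 'S_n) c s *: Estar (permm lam s).
Proof.
(* The argument does not use that [lam] is a partition. *)
move=> _ f; split=> [/Vstar_Estar_expansion fE|[c ->]]; last exact: Vstar_sum_Estar.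
by exists (Estar_coef lam f).
Qed.
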